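(* Let $R$ be a commutative ring with $1_R$ which is torsion free (an integral domain), let $M$ be a torsion free $R$-module, and let $\mathbf f$ be an endomorphism of $M$. Suppose: (b) $\mathbf f$ maps $\varphi_0(M)$ onto $\varphi_0(M)$; (d) $\varphi_\varepsilon(x)$, for $\varepsilon\le\varepsilon_*$, are formulas of $\mathscr{L}_{\infty,\aleph_0}(\tau_R)$ generated from atomic formulas by $\exists$ and $\wedge$ (existential positive); (e) $\langle\varphi_\varepsilon(M):\varepsilon\le\varepsilon_*\rangle$ is a $\subseteq$-decreasing continuous sequence of submodules of $M$; (f) $\varphi_{\varepsilon_*}(M)=\{0_M\}$; (g) for each $\varepsilon<\varepsilon_*$, $\varphi_\varepsilon(M)/\varphi_{\varepsilon+1}(M)$ is torsion free of rank $1$, hence isomorphic to a sub-$R$-module of $\mathbb Q_R$; (h) $x_\varepsilon\in\varphi_\varepsilon(M)\setminus\varphi_{\varepsilon+1}(M)$ for $\varepsilon<\varepsilon_*$; (i) $\varphi_0(M)=\mathrm{PC}_M(\{x_\varepsilon:\varepsilon<\varepsilon_*\})$. Then $\mathbf f\restriction\varphi_0(M)$ is one-to-one.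
   Context: $\tau_R$ is the vocabulary of $R$-modules ($+,-,0$ and unary multiplication by each $r\in R$). $\mathbb Q_R$ is the field of fractions of $R$. A decreasing sequence indexed by $\varepsilon\le\varepsilon_*$ is continuous if at each limit $\delta$ the $\delta$-th term is the intersection of the earlier terms. A submodule $N\subseteq M$ is pure if $rN=rM\cap N$ for all $r\in R$; $\mathrm{PC}_M(Y)$ denotes the minimal pure submodule of $M$ containing $Y$. $\varphi(M)=\{a\in M:M\models\varphi[a]\}$. *)

From HB Require Import structures.
From mathcomp Require Import all_boot all_order all_algebra.
Set Implicit Arguments. Unset Strict Implicit. Unset Printing Implicit Defensive.
Import GRing.Theory.
Local Open Scope ring_scope.

Inductive term (R : Type) : Type :=
  | tVar (n : nat)
  | tZero
  | tAdd (t1 t2 : term R)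
  | tOpp (t : term R)
  | tSub (t1 t2 : term R)
  | tScale (r : R) (t : term R).

(* Formulas generated from atomic formulas (t1 = t2) by arbitrary (infinitary)
   conjunctions and existential quantification over a single variable
   (hence over finitely many variables). *)
Inductive epform (R : Type) : Type :=
  | fAtom (t1 t2 : term R)
  | fConj (I : Type) (F : I -> epform R)
  | fEx (n : nat) (phi : epform R).

Section Semantics.
Variables (R : pzRingType) (M : lmodType R).

Fixpoint teval (v : nat -> M) (t : term R) : M :=
  match t with
  | tVar n => v n
  | tZero => 0
  | tAdd t1 t2 => teval v t1 + teval v t2
  | tOpp t => - teval v t
  | tSub t1 t2 => teval v t1 - teval v t2
  | tScale r t => r *: teval v t
  end.

Fixpoint sat (v : nat -> M) (phi : epform R) : Prop :=
  match phi with
  | fAtom t1 t2 => teval v t1 = teval v t2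
  | fConj _ F => forall i, sat v (F i)
  | fEx n psi => exists a : M, sat (fun k => if k == n then a else v k) psi
  end.

End Semantics.

Fixpoint tfree (R : Type) (n : nat) (t : term R) : Prop :=
  match t with
  | tVar m => m = n
  | tZero => False
  | tAdd t1 t2 => tfree n t1 \/ tfree n t2
  | tOpp t => tfree n t
  | tSub t1 t2 => tfree n t1 \/ tfree n t2
  | tScale _ t => tfree n t
  end.

Fixpoint free_in (R : Type) (n : nat) (phi : epform R) : Prop :=
  match phi with
  | fAtom t1 t2 => tfree n t1 \/ tfree n t2
  | fConj _ F => exists i, free_in n (F i)
  | fEx m psi => n <> m /\ free_in n psi
  end.

Definition one_var (R : Type) (phi : epform R) : Prop :=
  forall n, free_in n phi -> n = 0%N.

Definition defset {R : pzRingType} (M : lmodType R) (phi : epform R) : M -> Prop :=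
  fun a => sat (fun k => if k == 0%N then a else 0) phi.

Section Modules.
Variables (R : pzRingType) (M : lmodType R).

Definition torsion_free : Prop :=
  forall (r : R) (m : M), r *: m = 0 -> r = 0 \/ m = 0.

Definition is_submodule (N : M -> Prop) : Prop :=
  [/\ N 0, (forall a b, N a -> N b -> N (a + b)) & (forall r a, N a -> N (r *: a))].

(* N is pure in M: r N = r M ∩ N for all r *)
Definition is_pure (N : M -> Prop) : Prop :=
  is_submodule N /\
  forall (r : R) (m : M), N (r *: m) -> exists n, N n /\ r *: n = r *: m.

(* N = PC_M(Y): a minimal pure submodule of M containing Y *)
Definition is_PC (N Y : M -> Prop) : Prop :=
  [/\ is_pure N, (forall y, Y y -> N y) &
      forall N', is_pure N' -> (forall y, Y y -> N' y) -> (forall a, N' a -> N a) ->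
                 forall a, N a -> N' a].

(* For submodules B ⊆ A: A/B is torsion free (written on representatives) *)
Definition quot_torsion_free (A B : M -> Prop) : Prop :=
  forall (r : R) (a : M), A a -> r != 0 -> B (r *: a) -> B a.

(* For submodules B ⊆ A: A/B has rank 1, i.e. A/B is nonzero and any two
   elements of A/B are R-linearly dependent (written on representatives) *)
Definition quot_rank1 (A B : M -> Prop) : Prop :=
  (exists a, A a /\ ~ B a) /\
  forall a b, A a -> A b ->
    exists r s : R, (r != 0 \/ s != 0) /\ B (r *: a + s *: b).

End Modules.

(* ---------- Ordinals eps <= eps_* encoded as a well-order with a maximum ---------- *)
Section Order.
Variables (T : Type) (lt : T -> T -> Prop).

Definition well_order : Prop :=
  [/\ (forall x, ~ lt x x), (forall x y z, lt x y -> lt y z -> lt x z),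
      (forall x y, x = y \/ lt x y \/ lt y x) & well_founded lt].

Definition is_least (z : T) : Prop := forall e, z = e \/ lt z e.

Definition is_succ (e e' : T) : Prop :=
  lt e e' /\ forall z, lt e z -> z = e' \/ lt e' z.

Definition is_limit (d : T) : Prop :=
  ~ is_least d /\ ~ (exists e, is_succ e d).

End Order.
Arguments defset {R} M phi _.

From HB Require Import structures.
From mathcomp Require Import all_boot all_order all_algebra.
From Stdlib Require Import Classical.
Set Implicit Arguments. Unset Strict Implicit. Unset Printing Implicit Defensive.
Import GRing.Theory.
Local Open Scope ring_scope.

(* Existential positive formulas are preserved by homomorphisms, so [f] maps
   every [phi_e(M)] into itself and induces an endomorphism of each layer
   [phi_e(M)/phi_(e+1)(M)]; the layer being torsion free of rank 1, this
   endomorphism is injective or zero.  By well-founded induction on [e] it is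
   never zero: otherwise write [x_e = f c] by surjectivity; [c] cannot lie in
   [phi_e(M)] since [x_e] is not in [phi_(e+1)(M)], so [c] drops out of the
   filtration at an earlier layer [z], where [f c = x_e] in [phi_(z+1)(M)]
   contradicts injectivity on layer [z].  Hence a nonzero [a] in [phi_0(M)]
   with [f a = 0] is impossible: look at the layer where [a] drops out. *)

Section Homomorphism.
Variables (R : pzRingType) (M M' : lmodType R) (f : {linear M -> M'}).

Lemma teval_linear (t : term R) (v : nat -> M) (w : nat -> M') :
  (forall k, w k = f (v k)) -> teval w t = f (teval v t).
Proof.
move=> wE; elim: t => [n||t1 IH1 t2 IH2|t IH|t1 IH1 t2 IH2|r t IH] /=.
- exact: wE.
- by rewrite raddf0.
- by rewrite IH1 IH2 raddfD.
- by rewrite IH raddfN.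
- by rewrite IH1 IH2 raddfB.
- by rewrite IH linearZ.
Qed.

Lemma sat_linear (phi : epform R) (v : nat -> M) (w : nat -> M') :
  (forall k, w k = f (v k)) -> sat v phi -> sat w phi.
Proof.
elim: phi v w => [t1 t2|I F IH|n psi IH] v w wE /=.
- by rewrite (teval_linear t1 wE) (teval_linear t2 wE) => ->.
- by move=> satF i; apply: IH wE (satF i).
- move=> [a sat_a]; exists (f a); apply: IH sat_a => k.
  by case: (k == n).
Qed.

Lemma defset_linear (phi : epform R) (a : M) :
  defset M phi a -> defset M' phi (f a).
Proof. by apply: sat_linear => k; case: (k == 0%N); rewrite ?raddf0. Qed.

End Homomorphism.

Section WellOrder.
Variables (T : Type) (lt : T -> T -> Prop).
Hypothesis wo : well_order lt.

Lemma lt_le_trans e e' z : lt e e' -> e' = z \/ lt e' z -> lt e z.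
Proof. by case: wo => _ lt_trans _ _ lt_ee' [<- | /(lt_trans _ _ _ lt_ee')]. Qed.

Lemma well_order_minimal (P : T -> Prop) z :
  P z -> exists2 m, P m & forall e, lt e m -> ~ P e.
Proof.
case: wo => _ _ _ lt_wf; elim/(well_founded_ind lt_wf): z => z IH Pz.
have [[e [lt_ez Pe]] | no_below] := classic (exists e, lt e z /\ P e).
  exact: IH lt_ez Pe.
by exists z => // e lt_ez Pe; apply: no_below; exists e.
Qed.

Lemma least_succ_or_limit z :
  [\/ is_least lt z, exists e, is_succ lt e z | is_limit lt z].
Proof.
have [|not_least] := classic (is_least lt z); first by constructor 1.
have [|not_succ] := classic (exists e, is_succ lt e z); first by constructor 2.
by constructor 3.
Qed.

Lemma least_unique e0 z : is_least lt e0 -> is_least lt z -> z = e0.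
Proof.
case: wo => lt_irr lt_trans _ _ least_e0 least_z.
have [// | lt_e0z] := least_e0 z; have [// | lt_ze0] := least_z e0.
by case: (lt_irr z); apply: lt_trans lt_ze0 lt_e0z.
Qed.

Lemma first_failure_at_succ (P : T -> Prop) e0 z :
  is_least lt e0 -> P e0 ->
  (forall d, is_limit lt d -> (forall e, lt e d -> P e) -> P d) ->
  ~ P z -> exists e e', [/\ is_succ lt e e', P e, ~ P e' & e' = z \/ lt e' z].
Proof.
move=> least_e0 P_e0 P_limit not_Pz.
have [m not_Pm below_m] := well_order_minimal (P := fun e => ~ P e) not_Pz.
have P_below e : lt e m -> P e by move=> lt_em; apply: NNPP; apply: below_m.
have m_le_z : m = z \/ lt m z.
  case: wo => _ _ lt_total _; have [|[|lt_zm]] := lt_total m z; try tauto.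
  by case: (below_m z).
have [least_m | [e succ_em] | limit_m] := least_succ_or_limit m.
- by case: not_Pm; rewrite (least_unique least_e0 least_m).
- by exists e, m; split=> //; apply: P_below; case: succ_em.
- by case: not_Pm; apply: P_limit.
Qed.

End WellOrder.

Section RankOneQuotient.
Variables (R : pzRingType) (M : lmodType R) (f : {linear M -> M}).
Variables (A B : M -> Prop).
Hypotheses (B_sub : is_submodule B) (AB_tf : quot_torsion_free A B)
  (AB_rank1 : quot_rank1 A B).
Hypotheses (fA : forall a, A a -> A (f a)) (fB : forall b, B b -> B (f b)).

Lemma quot_rank1_endo_zero a :
  A a -> ~ B a -> B (f a) -> forall b, A b -> B (f b).
Proof.
move=> Aa not_Ba Bfa b Ab; have [B0 BD BZ] := B_sub.
have [r [s [rs_neq0 B_rasb]]] := AB_rank1.2 a b Aa Ab.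
have [s0 | s_neq0] := eqVneq s 0.
  move: rs_neq0 B_rasb; rewrite s0 scale0r addr0 eqxx => -[r_neq0 | //] Bra.
  by case: not_Ba; apply: AB_tf Bra.
apply: AB_tf (fA Ab) s_neq0 _.
have -> : s *: f b = f (r *: a + s *: b) + (-1) *: (r *: f a).
  by rewrite linearD !linearZ /= scaleN1r addrAC subrr add0r.
by apply: BD; [apply: fB | apply/BZ/BZ].
Qed.

End RankOneQuotient.

Section Filtration.
Variables (R : pzRingType) (M : lmodType R) (f : {linear M -> M}).
Variables (T : Type) (lt : T -> T -> Prop) (estar e0 : T).
Variables (N : T -> M -> Prop) (x : T -> M).
Hypotheses (wo : well_order lt) (le_estar : forall e, e = estar \/ lt e estar)
  (least_e0 : is_least lt e0).
Hypotheses (N_sub : forall e, is_submodule (N e))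
  (N_decr : forall e z, lt e z -> forall a, N z a -> N e a)
  (N_limit : forall d, is_limit lt d ->
     forall a, (forall e, lt e d -> N e a) -> N d a)
  (N_estar : forall a, N estar a -> a = 0).
Hypotheses (N_f : forall e a, N e a -> N e (f a))
  (f_onto : forall b, N e0 b -> exists a, N e0 a /\ f a = b).
Hypotheses (N_layer : forall e e', lt e estar -> is_succ lt e e' ->
     quot_torsion_free (N e) (N e') /\ quot_rank1 (N e) (N e'))
  (x_layer : forall e e', lt e estar -> is_succ lt e e' ->
     N e (x e) /\ ~ N e' (x e)).

Lemma N_le e z a : e = z \/ lt e z -> N z a -> N e a.
Proof. by case=> [-> // | /N_decr]; apply. Qed.

Lemma N_sub_N0 e a : N e a -> N e0 a.
Proof. by apply: N_le; case: (least_e0 e) => [->|]; [left | right]. Qed.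

Lemma N_drop c z : N e0 c -> ~ N z c ->
  exists e e', [/\ is_succ lt e e', N e c, ~ N e' c & e' = z \/ lt e' z].
Proof.
move=> N0c.
apply: (first_failure_at_succ wo (P := fun e => N e c) least_e0) => //.
by move=> d limit_d; apply: N_limit.
Qed.

Lemma lt_estar e e' z : is_succ lt e e' -> e' = z \/ lt e' z -> lt e estar.
Proof.
move=> [lt_ee' _] le_e'z; apply: lt_le_trans (le_estar _) => //.
exact: lt_le_trans le_e'z.
Qed.

Lemma layer_reflect e : lt e estar -> forall e', is_succ lt e e' ->
  forall a, N e a -> N e' (f a) -> N e' a.
Proof.
case: (wo) => _ _ _ lt_wf; elim/(well_founded_ind lt_wf): e.
move=> e IH lt_e_estar e' succ_ee' a Nea Ne'fa; apply: NNPP => not_Ne'a.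
have [N_tf N_rank1] := N_layer lt_e_estar succ_ee'.
have f_kills_layer := quot_rank1_endo_zero (N_sub e') N_tf N_rank1
  (@N_f e) (@N_f e') Nea not_Ne'a Ne'fa.
have [Nex not_Ne'x] := x_layer lt_e_estar succ_ee'.
have [c [N0c fc]] := f_onto (N_sub_N0 Nex).
have [Nec | not_Nec] := classic (N e c).
  by case: not_Ne'x; rewrite -fc; apply: f_kills_layer.
have [z [z' [succ_zz' Nzc not_Nz'c le_z'e]]] := N_drop N0c not_Nec.
have lt_ze : lt z e by apply: lt_le_trans le_z'e; case: succ_zz'.
apply: not_Nz'c; apply: IH lt_ze (lt_estar succ_zz' le_z'e) _ succ_zz' _ Nzc _.
by rewrite fc; apply: N_le le_z'e Nex.
Qed.

Lemma N0_kernel_trivial a : N e0 a -> f a = 0 -> a = 0.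
Proof.
move=> N0a fa0; apply: NNPP => a_neq0.
have not_N_estar : ~ N estar a by move/N_estar.
have [z [z' [succ_zz' Nza not_Nz'a le_z'estar]]] := N_drop N0a not_N_estar.
apply: not_Nz'a.
apply: layer_reflect (lt_estar succ_zz' le_z'estar) _ succ_zz' _ Nza _.
by rewrite fa0; case: (N_sub z').
Qed.

Lemma N0_injective a b : N e0 a -> N e0 b -> f a = f b -> a = b.
Proof.
move=> N0a N0b fab; apply/eqP; rewrite -subr_eq0; apply/eqP.
apply: N0_kernel_trivial; last by rewrite linearB fab subrr.
have [_ ND NZ] := N_sub e0.
by rewrite -scaleN1r; apply: ND => //; apply: NZ.
Qed.

End Filtration.

Theorem lemma6p3 (R : idomainType) (M : lmodType R) (f : {linear M -> M})
  (T : Type) (lt : T -> T -> Prop) (estar e0 : T)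
  (phi : T -> epform R) (x : T -> M) :
  well_order lt ->
  (forall e, e = estar \/ lt e estar) ->
  is_least lt e0 ->
  torsion_free M ->
  (* (b) f maps phi_0(M) onto phi_0(M) *)
  (forall a, defset M (phi e0) a -> defset M (phi e0) (f a)) ->
  (forall b, defset M (phi e0) b -> exists a, defset M (phi e0) a /\ f a = b) ->
  (* (d) each phi_eps is an existential positive formula in one free variable x *)
  (forall e, one_var (phi e)) ->
  (* (e) decreasing continuous sequence of submodules *)
  (forall e, is_submodule (defset M (phi e))) ->
  (forall e z, lt e z -> forall a, defset M (phi z) a -> defset M (phi e) a) ->
  (forall d, is_limit lt d ->
     forall a, defset M (phi d) a <-> (forall e, lt e d -> defset M (phi e) a)) ->
  (* (f) *)
  (forall a, defset M (phi estar) a <-> a = 0) ->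
  (* (g) *)
  (forall e e', lt e estar -> is_succ lt e e' ->
     quot_torsion_free (defset M (phi e)) (defset M (phi e')) /\
     quot_rank1 (defset M (phi e)) (defset M (phi e'))) ->
  (* (h) *)
  (forall e e', lt e estar -> is_succ lt e e' ->
     defset M (phi e) (x e) /\ ~ defset M (phi e') (x e)) ->
  (* (i) *)
  is_PC (defset M (phi e0)) (fun y => exists e, lt e estar /\ y = x e) ->
  (* conclusion: f restricted to phi_0(M) is one-to-one *)
  forall a b, defset M (phi e0) a -> defset M (phi e0) b -> f a = f b -> a = b.
Proof.
move=> wo le_estar least_e0 _ _ f_onto _ N_sub N_decr N_limit N_estar
  N_layer x_layer _.
apply: (N0_injective (x := x)) wo le_estar least_e0 N_sub N_decr _ _ _ f_onto
  N_layer x_layer.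
- by move=> d limit_d a; apply: (N_limit d limit_d a).2.
- by move=> a; apply: (N_estar a).1.
- by move=> e a; apply: defset_linear.
Qed.
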